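(* Let $(M,\Sigma)$ be a measurable space, $r\ge1$, and $\mu_1,\dots,\mu_r$ non-atomic countably additive finite measures on $\Sigma$; put $\mu=\frac1r\sum_{i=1}^r\mu_i$. For $k\ge1$ let $t(k)=k\bmod r$ if this is nonzero and $t(k)=r$ otherwise. Let $(H_k)_{k\ge1}$ be a sequence of measurable sets such that for every $k$: $H_k\subseteq M\setminus\bigcup_{i=1}^{k-1}H_i$, $H_k$ admits a strong solution (a partition $H_k=F_1\sqcup\dots\sqcup F_r$ with $\mu_i(F_i)\ge\mu_i(F_j)$ for all $i,j$), and $\mu_{t(k)}(H_k)\ge 2^{-(r-1)}\mu_{t(k)}\bigl(M\setminus\bigcup_{i=1}^{k-1}H_i\bigr)$. For $s\ge0$ let $M_s=M\setminus\bigcup_{i=1}^{sr}H_i$. Then for every $s\ge0$, $$\mu(M_s)\le\Bigl(\frac{2^{r-1}-1}{2^{r-1}}\Bigr)^{s}\mu(M).$$ *)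

From HB Require Import structures.
From mathcomp Require Import all_boot all_order all_algebra.
From mathcomp Require Import all_classical all_reals all_analysis.
Set Implicit Arguments. Unset Strict Implicit. Unset Printing Implicit Defensive.
Import Order.TTheory GRing.Theory Num.Theory.
Local Open Scope classical_set_scope.
Local Open Scope ring_scope.

Definition prefix_union (T : Type) (H : nat -> set T) (k : nat) : set T :=
  \big[setU/set0]_(1 <= i < k) H i.

Definition tidx (r k : nat) : nat := if (k %% r != 0)%N then (k %% r)%N else r.

Definition nonatomic d (T : measurableType d) (R : realType)
  (m : {measure set T -> \bar R}) : Prop :=
  forall A, measurable A -> (0 < m A)%E ->
    exists2 B, measurable B /\ B `<=` A & (0 < m B)%E /\ (m B < m A)%E.

Definition strong_solution d (T : measurableType d) (R : realType) (r : nat)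
  (mu : nat -> {measure set T -> \bar R}) (H : set T) : Prop :=
  exists F : nat -> set T,
    [/\ forall i, (1 <= i <= r)%N -> measurable (F i),
        forall i j, (1 <= i <= r)%N -> (1 <= j <= r)%N -> i <> j -> F i `&` F j = set0,
        H = \big[setU/set0]_(1 <= i < r.+1) F i &
        forall i j, (1 <= i <= r)%N -> (1 <= j <= r)%N -> (mu i (F j) <= mu i (F i))%E].

From HB Require Import structures.
From mathcomp Require Import all_boot all_order all_algebra.
From mathcomp Require Import all_classical all_reals all_analysis.
Set Implicit Arguments. Unset Strict Implicit. Unset Printing Implicit Defensive.
Import Order.TTheory GRing.Theory Num.Theory.
Local Open Scope classical_set_scope.
Local Open Scope ring_scope.

(* Write [M_k] for the part of the space not yet covered by [H_1, ..., H_(k-1)].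
   Since [M_k] is the disjoint union of [M_(k+1)] and [H_k], the largeness
   hypothesis makes step [k] shrink [mu_(t k)(M_k)] by the factor
   [1 - 2^-(r-1)], while every other [mu_i(M_k)] does not increase.  Each
   block of [r] consecutive steps thus contracts every [mu_i], hence their
   mean, by that factor. *)

Definition remainder (T : Type) (H : nat -> set T) (k : nat) : set T :=
  setT `\` prefix_union H k.

Lemma prefix_unionS (T : Type) (H : nat -> set T) (k : nat) : (1 <= k)%N ->
  prefix_union H k.+1 = prefix_union H k `|` H k.
Proof. by move=> k1; rewrite /prefix_union big_nat_recr. Qed.

Lemma prefix_union_subset (T : Type) (H : nat -> set T) (k l : nat) :
  (k <= l)%N -> prefix_union H k `<=` prefix_union H l.
Proof.
move=> kl; case: (leqP k 1) => [k1|k1].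
  by rewrite /prefix_union big_geq.
rewrite /prefix_union [X in _ `<=` X](@big_cat_nat _ _ _ k) ?(ltnW k1) //.
exact: subsetUl.
Qed.

Lemma remainder_subset (T : Type) (H : nat -> set T) (k l : nat) :
  (k <= l)%N -> remainder H l `<=` remainder H k.
Proof. by move=> kl; apply: setDS; apply: prefix_union_subset. Qed.

Lemma remainder1 (T : Type) (H : nat -> set T) : remainder H 1 = setT.
Proof. by rewrite /remainder /prefix_union big_geq // setD0. Qed.

Lemma remainderS_disjoint (T : Type) (H : nat -> set T) (k : nat) :
  (1 <= k)%N -> remainder H k.+1 `&` H k = set0.
Proof. by move=> k1; rewrite /remainder prefix_unionS // -setDDl setIC setDIK. Qed.

Section remainder_measure.
Context d (T : measurableType d) (R : realType) (H : nat -> set T).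
Hypothesis measurable_H : forall k, (1 <= k)%N -> measurable (H k).
Hypothesis H_sub_remainder : forall k, (1 <= k)%N -> H k `<=` remainder H k.

Lemma measurable_remainder (k : nat) : measurable (remainder H k).
Proof.
apply: measurableD => //; rewrite /prefix_union big_nat_cond.
by apply: bigsetU_measurable => i /andP[/andP[i1 _] _]; apply: measurable_H.
Qed.

Lemma remainderS (k : nat) : (1 <= k)%N ->
  remainder H k = remainder H k.+1 `|` H k.
Proof.
move=> k1; rewrite /remainder prefix_unionS // -setDDl setDKU //.
exact: H_sub_remainder.
Qed.

Lemma measure_remainderS (m : {measure set T -> \bar R}) (k : nat) : (1 <= k)%N ->
  m (remainder H k) = (m (remainder H k.+1) + m (H k))%E.
Proof.
move=> k1; rewrite {1}remainderS //.
by apply: measureU; [exact: measurable_remainder|exact: measurable_H|exact: remainderS_disjoint].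
Qed.

Lemma measure_remainderS_le (m : {measure set T -> \bar R}) (q : R) (k : nat) :
  (1 <= k)%N -> m (remainder H k) \is a fin_num ->
  (q%:E * m (remainder H k) <= m (H k))%E ->
  (m (remainder H k.+1) <= (1 - q)%:E * m (remainder H k))%E.
Proof.
move=> k1 mk_fin; rewrite measure_remainderS // in mk_fin *.
move: mk_fin; rewrite fin_numD => /andP[/fineK <- /fineK <-].
by rewrite -EFinD -!EFinM !lee_fin mulrBl mul1r lerBrDr lerD2l.
Qed.

End remainder_measure.

Lemma fin_num_measure_of_finite d (T : measurableType d) (R : realType)
    (m : {measure set T -> \bar R}) (A : set T) :
  (m setT < +oo)%E -> measurable A -> m A \is a fin_num.
Proof.
move=> mT_fin mA; rewrite ge0_fin_numE ?measure_ge0 //.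
by apply: le_lt_trans mT_fin; apply: le_measure; rewrite ?inE.
Qed.

Lemma tidx_mulnDr (r s j : nat) : (1 <= j <= r)%N -> tidx r (s * r + j) = j.
Proof.
move=> /andP[j1 jr]; rewrite /tidx modnMDl.
have [jltr|rlej] := ltnP j r; first by rewrite modn_small // -lt0n j1.
have -> : j = r by apply/eqP; rewrite eqn_leq jr rlej.
by rewrite modnn.
Qed.

Lemma geometric_decay (R : realDomainType) (u : nat -> \bar R) (c : R) :
  0 <= c -> (forall s, (u s.+1 <= c%:E * u s)%E) ->
  forall s, (u s <= (c ^+ s)%:E * u 0%N)%E.
Proof.
move=> c0 u_dec; elim=> [|s IHs]; first by rewrite expr0 mul1e.
apply: le_trans (u_dec s) _; rewrite exprS EFinM -muleA.
by apply: lee_wpmul2l; rewrite ?lee_fin.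
Qed.

Section block_contraction.
Context d (T : measurableType d) (R : realType) (r : nat).
Variables (mu : nat -> {measure set T -> \bar R}) (H : nat -> set T) (q : R).
Hypothesis measurable_H : forall k, (1 <= k)%N -> measurable (H k).
Hypothesis H_sub_remainder : forall k, (1 <= k)%N -> H k `<=` remainder H k.
Hypothesis mu_finite : forall i, (1 <= i <= r)%N -> (mu i setT < +oo)%E.
Hypothesis q_le1 : q <= 1.
Hypothesis H_large : forall k, (1 <= k)%N ->
  (q%:E * mu (tidx r k) (remainder H k) <= mu (tidx r k) (H k))%E.

(* Step [s r + i] is where block [s] shrinks [mu i]. *)
Lemma measure_remainder_block (s i : nat) : (1 <= i <= r)%N ->
  (mu i (remainder H (s.+1 * r).+1) <= (1 - q)%:E * mu i (remainder H (s * r).+1))%E.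
Proof.
move=> /[dup] ir /andP[i1 ile]; set k := (s * r + i)%N.
have k1 : (1 <= k)%N by rewrite (leq_trans i1) ?leq_addl.
have mu_mono l l' : (l <= l')%N -> (mu i (remainder H l') <= mu i (remainder H l))%E.
  move=> ll'; apply: le_measure; rewrite ?inE; try exact: measurable_remainder.
  exact: remainder_subset.
have k_fin : mu i (remainder H k) \is a fin_num.
  exact: fin_num_measure_of_finite (mu_finite ir) (measurable_remainder _ _).
have H_large_k : (q%:E * mu i (remainder H k) <= mu i (H k))%E.
  by have := H_large k1; rewrite /k tidx_mulnDr.
apply: (le_trans (mu_mono k.+1 _ _)); first by rewrite ltnS mulSnr leq_add2l.
apply: (le_trans (measure_remainderS_le measurable_H H_sub_remainder k1 k_fin H_large_k)).
by apply: lee_wpmul2l; [rewrite lee_fin subr_ge0|apply: mu_mono; rewrite -addn1 leq_add2l].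
Qed.

Lemma sum_measure_remainder_le (s : nat) :
  (\sum_(1 <= i < r.+1) mu i (remainder H (s * r).+1)
    <= ((1 - q) ^+ s)%:E * \sum_(1 <= i < r.+1) mu i setT)%E.
Proof.
rewrite -(remainder1 H); apply: (geometric_decay (u := fun s => _)).
  by rewrite subr_ge0.
move=> {}s; rewrite ge0_sume_distrr => [|i _]; last exact: measure_ge0.
rewrite big_nat_cond [X in (_ <= X)%E]big_nat_cond.
apply: lee_sum => i /andP[/andP[i1 ir] _].
by apply: measure_remainder_block; rewrite i1 -ltnS.
Qed.

End block_contraction.

Theorem corollary2 (d : measure_display) (T : measurableType d) (R : realType)
  (r : nat) (hr : (1 <= r)%N) (mu : nat -> {measure set T -> \bar R})
  (hfin : forall i, (1 <= i <= r)%N -> (mu i setT < +oo)%E)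
  (hna : forall i, (1 <= i <= r)%N -> nonatomic (mu i))
  (H : nat -> set T)
  (hHm : forall k, (1 <= k)%N -> measurable (H k))
  (hHsub : forall k, (1 <= k)%N -> H k `<=` setT `\` prefix_union H k)
  (hHsol : forall k, (1 <= k)%N -> strong_solution r mu (H k))
  (hHbig : forall k, (1 <= k)%N ->
     (((2 ^+ (r - 1))^-1)%:E * mu (tidx r k) (setT `\` prefix_union H k)
        <= mu (tidx r k) (H k))%E) :
  forall s : nat,
    ((r%:R^-1)%:E * \sum_(1 <= i < r.+1) mu i (setT `\` prefix_union H (s * r).+1)
      <= (((2 ^+ (r - 1) - 1) / 2 ^+ (r - 1)) ^+ s)%:E
         * ((r%:R^-1)%:E * \sum_(1 <= i < r.+1) mu i setT))%E.
Proof.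
have pow2_gt0 : (0 : R) < 2 ^+ (r - 1) by apply: exprn_gt0.
have q_le1 : (2 ^+ (r - 1))^-1 <= 1 :> R by rewrite invf_le1 // exprn_ege1 // ler1n.
have -> : (2 ^+ (r - 1) - 1) / 2 ^+ (r - 1) = 1 - (2 ^+ (r - 1))^-1 :> R.
  by rewrite mulrBl mul1r divff // gt_eqF.
move=> s; rewrite muleCA; apply: lee_wpmul2l; first by rewrite lee_fin invr_ge0.
exact: (sum_measure_remainder_le hHm hHsub hfin q_le1 hHbig).
Qed.
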